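(* Let $\ast$ be a composition on $\mathbb{L}$ that admits Taylor expansion, i.e., for all $f,g,h\in\mathbb{L}$ with $g>\mathbb{R}$ and $h\prec g$ the sum $\sum_{n=0}^\infty\frac{f^{(n)}\ast g}{n!}h^n$ exists and equals $f\ast(g+h)$. Then $\ast$ obeys the chain rule: $(f\ast g)'=(f'\ast g)\cdot g'$ for all $f,g\in\mathbb{L}$ with $g>\mathbb{R}$.
   Context: Fix distinct symbols $\ell_\alpha$ for all ordinals $\alpha$. Exponent sequences $r=(r_\beta)$ are families of reals over all ordinals, zero beyond some ordinal; monomials $\ell^r=\prod_\beta\ell_\beta^{r_\beta}$ form a group $\mathfrak{L}$ ($\ell^r\ell^s=\ell^{r+s}$), ordered by $\ell^r\prec\ell^s$ iff $r\ne s$ and $r_\beta<s_\beta$ at the least differing $\beta$; $\ell_\alpha$ is the monomial with exponent $1$ at $\alpha$ and $0$ elsewhere, $x:=\ell_0$. With $\sigma(\ell^r)=\{\beta:r_\beta\neq0\}$, $\mathfrak{L}_{<\alpha}=\{\mathfrak{m}:\sigma(\mathfrak{m})\subseteq\alpha\}$, $\mathbb{L}_{<\alpha}=\mathbb{R}[[\mathfrak{L}_{<\alpha}]]$ is the Hahn field of series with well-based support (no infinite strictly increasing sequence), ordered by the sign of the leading coefficient, and $\mathbb{L}=\bigcup_\alpha\mathbb{L}_{<\alpha}$. $f\prec g$ means $\mathfrak{d}(f)\prec\mathfrak{d}(g)$, where $\mathfrak{d}$ is the largest monomial of the support ($\mathfrak{d}(0)=0$, below all monomials). $g>\mathbb{R}$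 means $g>c$ for all real $c$; $\mathbb{L}^{>\mathbb{R}}$ is the class of such $g$. Summable families: all members in one $\mathbb{L}_{<\alpha}$, union of supports well-based, each monomial in finitely many supports; sums coefficientwise. Logarithm: $\log\ell^r=\sum r_\beta\ell_{\beta+1}$ and $\log(c\,\mathfrak{d}(f)(1+\epsilon))=\log\mathfrak{d}(f)+\log c+\sum_{n\ge1}\frac{(-1)^{n-1}}{n}\epsilon^n$ for $c\in\mathbb{R}^{>0}$, $\epsilon\prec1$. $f'$, $f^{(n)}$ refer to the unique $\mathbb{R}$-linear derivation on $\mathbb{L}$ with $\ell_\alpha'=\prod_{\beta<\alpha}\ell_\beta^{-1}$ commuting with sums of summable families. A composition on $\mathbb{L}$ is a map $\ast:\mathbb{L}\times\mathbb{L}^{>\mathbb{R}}\to\mathbb{L}$ such that (CL1) each $f\mapsto f\ast g$ is an $\mathbb{R}$-algebra endomorphism; (CL2) $f\ast x=f$, $x\ast g=g$; (CL3) $\log(f\ast g)=(\log f)\ast g$ for $f>0$; (CL4) $f\mapsto f\ast g$ maps summable families to summable families and commutes with their sums; (CL5) $(f\ast g)\ast h=f\ast(g\ast h)$. *)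

From HB Require Import structures.
From mathcomp Require Import all_boot all_order all_algebra.
From mathcomp Require Import boolp classical_sets cardinality reals exp.
From Stdlib Require Import ClassicalEpsilon.
From Stdlib Require List.

Set Implicit Arguments.
Unset Strict Implicit.
Unset Printing Implicit Defensive.

Import Order.TTheory GRing.Theory Num.Theory.
Local Open Scope ring_scope.

(* The (class of) ordinals, modelled as a well-ordered type with a least
   element and successors. *)
Record ordStruct := OrdStruct {
  ocar :> Type;
  olt : ocar -> ocar -> Prop;
  olt_trans : forall a b c, olt a b -> olt b c -> olt a c;
  olt_irrefl : forall a, ~ olt a a;
  olt_total : forall a b, olt a b \/ a = b \/ olt b a;
  olt_wf : well_founded olt;
  ozero : ocar;
  ozero_least : forall a, a = ozero \/ olt ozero a;
  osucc : ocar -> ocar;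
  osucc_gt : forall a, olt a (osucc a);
  osucc_least : forall a b, olt a b -> b = osucc a \/ olt (osucc a) b }.

Section LogHyperseries.
Variable R : realType.
Variable O : ordStruct.

Definition fsum (I : Type) (c : I -> R) : R :=
  epsilon (inhabits 0) (fun v => exists s : list I, List.NoDup s /\
     (forall i, c i != 0 -> List.In i s) /\ v = \sum_(i <- s) c i).

(* exponent sequences r = (r_beta); a monomial l^r is identified with r *)
Definition expo := O -> R.
Definition eadd (r s : expo) : expo := fun b => r b + s b.
Definition ezero : expo := fun _ => 0.
(* the exponent sequence of l_a *)
Definition eunit (a : O) : expo := fun b => if `[< b = a >] then 1 else 0.
(* the exponent sequence of prod_{c <= b} l_c *)
Definition eupto (b : O) : expo :=
  fun c => if `[< c = b \/ olt c b >] then 1 else 0.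

Definition mon_lt (r s : expo) : Prop :=
  exists b, r b < s b /\ forall c, olt c b -> r c = s c.

Definition series := expo -> R.
Definition supp (f : series) : set expo := [set m | f m != 0].
Definition well_based (A : set expo) : Prop :=
  ~ exists u : nat -> expo, (forall n, A (u n)) /\ forall n, mon_lt (u n) (u n.+1).
Definition supp_below (a : O) (f : series) : Prop :=
  forall m, f m != 0 -> forall b, m b != 0 -> olt b a.
Definition inLa (a : O) (f : series) : Prop := supp_below a f /\ well_based (supp f).
Definition inL (f : series) : Prop := exists a, inLa a f.

Definition summable (I : Type) (F : I -> series) : Prop :=
  (exists a, forall i, inLa a (F i)) /\
  well_based (\bigcup_(i in [set: I]) supp (F i)) /\
  (forall m, finite_set [set i | F i m != 0]).
Definition ssum (I : Type) (F : I -> series) : series :=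
  fun m => fsum (fun i => F i m).

Definition mono (r : expo) : series := fun n => if `[< n = r >] then 1 else 0.
Definition cst (c : R) : series := fun n => if `[< n = ezero >] then c else 0.
Definition sadd (f g : series) : series := fun m => f m + g m.
Definition sopp (f : series) : series := fun m => - f m.
Definition sscale (c : R) (f : series) : series := fun m => c * f m.
Definition smul (f g : series) : series :=
  fun m => fsum (fun p : expo * expo =>
                   if `[< eadd p.1 p.2 = m >] then f p.1 * g p.2 else 0).
Definition spow (f : series) (n : nat) : series := iter n (smul f) (cst 1).
Definition xL : series := mono (eunit (ozero O)).

Definition is_lead (f : series) (m : expo) : Prop :=
  f m != 0 /\ forall n, mon_lt m n -> f n = 0.
Definition spos (f : series) : Prop := exists m, is_lead f m /\ 0 < f m.
Definition sgt (f g : series) : Prop := spos (sadd f (sopp g)).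
Definition gtR (g : series) : Prop := forall c : R, sgt g (cst c).
Definition asym_lt (f g : series) : Prop :=
  exists m, is_lead g m /\ forall n, f n != 0 -> mon_lt n m.

(* the derivation: (l^r)' = sum_b r_b l^(r - eupto b), extended coefficientwise *)
Definition sder (f : series) : series :=
  fun n => fsum (fun b : O => (n b + 1) * f (eadd n (eupto b))).
Definition sderN (n : nat) (f : series) : series := iter n sder f.

Definition lead (f : series) : expo := epsilon (inhabits ezero) (is_lead f).
Definition slog (f : series) : series :=
  let m := lead f in
  let c := f m in
  let eps : series := fun n => f (eadd n m) / c - (if `[< n = ezero >] then 1 else 0) in
  sadd (ssum (fun b : O => sscale (m b) (mono (eunit (osucc b)))))
   (sadd (cst (ln c))
     (ssum (fun k : nat => if k == 0%N then cst 0
                 else sscale ((-1) ^+ k.-1 / k%:R) (spow eps k)))).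

Definition is_composition (comp : series -> series -> series) : Prop :=
  (forall f g, inL f -> gtR g -> inL (comp f g)) /\
  (forall f h g, inL f -> inL h -> gtR g ->
      comp (sadd f h) g = sadd (comp f g) (comp h g)) /\
  (forall c f g, inL f -> gtR g -> comp (sscale c f) g = sscale c (comp f g)) /\
  (forall f h g, inL f -> inL h -> gtR g ->
      comp (smul f h) g = smul (comp f g) (comp h g)) /\
  (forall g, gtR g -> comp (cst 1) g = cst 1) /\
  (forall f, inL f -> comp f xL = f) /\
  (forall g, inL g -> gtR g -> comp xL g = g) /\
  (forall f g, inL f -> spos f -> gtR g -> slog (comp f g) = comp (slog f) g) /\
  (forall (I : Type) (F : I -> series) g, summable F -> gtR g ->
      summable (fun i => comp (F i) g) /\
      comp (ssum F) g = ssum (fun i => comp (F i) g)) /\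
  (forall f g h, inL f -> inL g -> inL h -> gtR g -> gtR h ->
      comp (comp f g) h = comp f (comp g h)).

Definition admits_taylor (comp : series -> series -> series) : Prop :=
  forall f g h, inL f -> inL g -> inL h -> gtR g -> asym_lt h g ->
    let T := fun n : nat =>
      sscale (n`!%:R)^-1 (smul (comp (sderN n f) g) (spow h n)) in
    summable T /\ ssum T = comp f (sadd g h).

End LogHyperseries.

From HB Require Import structures.
From mathcomp Require Import all_boot all_order all_algebra.
From mathcomp Require Import boolp classical_sets cardinality reals exp.
From Stdlib Require Import ClassicalEpsilon Permutation FinFun.
From Stdlib Require List.

Set Implicit Arguments.
Unset Strict Implicit.
Unset Printing Implicit Defensive.

Import Order.TTheory GRing.Theory Num.Theory.
Local Open Scope ring_scope.

(* Derivatives are read off from a Taylor expansion at x with a fresh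
   infinitesimal increment.  Take an ordinal a beyond every ordinal occurring
   in the supports of g and of all the f^(k) o g, and let e = l_a^-1.  Since
   S^(k) does not involve l_a, the expansion S o (x + e) = sum_k S^(k) e^k / k!
   splits S o (x + e) according to the exponent at a ("level"): its level -k
   part is S^(k) e^k / k!, so its level -1 part is S' e.  By associativity,
   (f o g) o (x + e) = f o (g + h) with h = g o (x + e) - g, which lives at
   levels <= -1 and whose level -1 part is g' e.  In the Taylor expansion of
   f o (g + h) at g only (f' o g) h reaches level -1, and comparing level -1
   parts gives (f o g)' = (f' o g) g'. *)

Section FiniteSums.
Variable R : realType.
Implicit Types (I J : Type).

Lemma big_filter_neq0 I (c : I -> R) (s : list I) :
  \sum_(i <- List.filter (fun i => c i != 0) s) c i = \sum_(i <- s) c i.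
Proof.
elim: s => [|i s IH] //=; rewrite big_cons; case: ifP => [_|/negbFE/eqP ->].
  by rewrite big_cons IH.
by rewrite add0r IH.
Qed.

Lemma big_Permutation I (c : I -> R) (s1 s2 : list I) :
  Permutation s1 s2 -> \sum_(i <- s1) c i = \sum_(i <- s2) c i.
Proof.
elim=> [|x l l' _ IH|x y l|l l' l'' _ IH1 _ IH2] //.
- by rewrite !big_cons IH.
- by rewrite !big_cons addrCA.
- by rewrite IH1 IH2.
Qed.

Lemma fsum_big I (c : I -> R) (s : list I) :
  List.NoDup s -> (forall i, c i != 0 -> List.In i s) ->
  fsum c = \sum_(i <- s) c i.
Proof.
move=> nd cov; rewrite /fsum.
have ex : exists v, exists s, List.NoDup s /\
    (forall i, c i != 0 -> List.In i s) /\ v = \sum_(i <- s) c i.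
  by exists (\sum_(i <- s) c i), s.
have [s' [nd' [cov' ->]]] := epsilon_spec (inhabits 0) _ ex.
rewrite -big_filter_neq0 -[RHS]big_filter_neq0; apply: big_Permutation.
apply: NoDup_Permutation; try exact: List.NoDup_filter.
move=> i; rewrite !List.filter_In.
by split=> -[_ ci]; split=> //; [apply: cov | apply: cov'].
Qed.

Lemma fsum_single I (c : I -> R) (i0 : I) :
  (forall i, i <> i0 -> c i = 0) -> fsum c = c i0.
Proof.
move=> c0; rewrite (@fsum_big _ _ [:: i0]) ?big_seq1 //.
  by constructor; [|constructor].
by move=> i; have [->|/c0 ->] := pselect (i = i0); [left|rewrite eqxx].
Qed.

Lemma fsum_neq0 I (c : I -> R) : fsum c != 0 -> exists i, c i != 0.
Proof.
apply: contraPP => /forallNP c0.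
by rewrite (@fsum_big _ _ [::]) ?big_nil ?eqxx //; constructor.
Qed.

Lemma fsum_reindex I J (c : I -> R) (phi : J -> I) (psi : I -> J) :
  cancel phi psi -> cancel psi phi -> fsum c = fsum (fun j => c (phi j)).
Proof.
move=> phiK psiK; rewrite /fsum; congr (epsilon _ _); apply: funext => v.
apply: propext; split=> -[s [nd [cov ->]]].
- exists (List.map psi s); split; first exact: Injective_map_NoDup (can_inj psiK) nd.
  split; last by rewrite big_map; apply: eq_bigr => i _; rewrite psiK.
  by move=> j cj; rewrite -(phiK j); apply: List.in_map; apply: cov.
- exists (List.map phi s); split; first exact: Injective_map_NoDup (can_inj phiK) nd.
  split; last by rewrite big_map.
  by move=> i ci; rewrite -(psiK i); apply: List.in_map; apply: cov; rewrite psiK.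
Qed.

End FiniteSums.

Section Ordinals.
Variable O : ordStruct.
Implicit Types a b c : O.

Definition ole a b := a = b \/ olt a b.

Lemma olt_asym a b : olt a b -> ~ olt b a.
Proof. by move=> ab ba; apply: (olt_irrefl (olt_trans ab ba)). Qed.

Lemma not_olt_ozero a : ~ olt a (ozero O).
Proof. by case: (ozero_least a) => [->|]; [exact: olt_irrefl | exact: olt_asym]. Qed.

Lemma olt_neq_ozero a b : olt a b -> b <> ozero O.
Proof. by move=> ab b0; apply: (@not_olt_ozero a); rewrite -b0. Qed.

Lemma ole_olt_trans a b c : ole a b -> olt b c -> olt a c.
Proof. by case=> [->//|]; exact: olt_trans. Qed.

Lemma olt_osucc a b : olt a (osucc b) -> ole a b.
Proof.
move=> ab; case: (olt_total a b) => [|[]]; [by right|by left|move=> ba].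
by case: (osucc_least ba) => [e|]; [rewrite e in ab; case: (olt_irrefl ab) | move/olt_asym].
Qed.

Lemma olt_ub2 a b : exists c, olt a c /\ olt b c.
Proof.
case: (olt_total a b) => [ab|[->|ba]].
- by exists (osucc b); split; [exact: olt_trans ab (osucc_gt b)|exact: osucc_gt].
- by exists (osucc b); split; exact: osucc_gt.
- by exists (osucc a); split; [exact: osucc_gt|exact: olt_trans ba (osucc_gt a)].
Qed.

Lemma olt_wf_min (P : O -> Prop) : (exists a, P a) ->
  exists a, P a /\ forall b, P b -> ~ olt b a.
Proof.
move=> [a Pa]; apply: NNPP => nomin; move: Pa.
elim/(well_founded_ind (@olt_wf O)): a => a IH Pa.
by apply: nomin; exists a; split=> // b Pb /IH; apply.
Qed.

(* With [m i >= i] a position of a minimal value of [b] on [[i, oo)], the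
   iterates of [m] index a nondecreasing subsequence. *)
Fixpoint iter_index (m : nat -> nat) (k : nat) : nat :=
  if k is k.+1 then m (iter_index m k).+1 else m 0%N.

Lemma olt_nondecreasing_subseq (b : nat -> O) : exists phi : nat -> nat,
  (forall k, (phi k < phi k.+1)%N) /\ forall k, ole (b (phi k)) (b (phi k.+1)).
Proof.
have /choice [m mP] : forall i, exists j,
    (i <= j)%N /\ forall j', (i <= j')%N -> ~ olt (b j') (b j).
  move=> i; have [|_ [[j [ij <-]] minj]] :=
    olt_wf_min (P := fun x => exists j, (i <= j)%N /\ b j = x); first by exists (b i), i.
  by exists j; split=> // j' ij'; apply: minj; exists j'.
exists (iter_index m); split=> [k|k] /=; first by case: (mP (iter_index m k).+1).
have [i [ik mi]] : exists i, (i <= iter_index m k)%N /\ m i = iter_index m k.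
  case: k => [|k] /=; first by exists 0%N.
  by exists (iter_index m k).+1; case: (mP (iter_index m k).+1).
have le_next : (i <= m (iter_index m k).+1)%N.
  by apply: (leq_trans ik); apply: ltnW; case: (mP (iter_index m k).+1).
rewrite -{1}mi; have /(_ _ le_next) := (mP i).2.
by case: (olt_total (b (m i)) (b (m (iter_index m k).+1))) => [|[]]; [right|left|].
Qed.

End Ordinals.

Section Monomials.
Variables (R : realType) (O : ordStruct).
Local Notation expo := (expo R O).
Implicit Types (p q r s : expo) (a b c : O).

Definition mon_le r s := r = s \/ mon_lt r s.

Lemma mon_lt_irr r : ~ mon_lt r r.
Proof. by case=> b [rb _]; rewrite ltxx in rb. Qed.

Lemma mon_lt_trans r s t : mon_lt r s -> mon_lt s t -> mon_lt r t.
Proof.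
move=> [b1 [lt1 eq1]] [b2 [lt2 eq2]].
case: (olt_total b1 b2) => [b12|[e|b21]]; [|subst b2|].
- exists b1; split; first by rewrite -(eq2 _ b12).
  by move=> c cb; rewrite eq1 // eq2 //; exact: olt_trans cb b12.
- by exists b1; split=> [|c cb]; [exact: lt_trans lt1 lt2 | rewrite eq1 ?eq2].
- exists b2; split; first by rewrite (eq1 _ b21).
  by move=> c cb; rewrite eq1 ?eq2 //; exact: olt_trans cb b21.
Qed.

Lemma mon_lt_neq r s : mon_lt r s -> r <> s.
Proof. by move=> rs e; rewrite e in rs; exact: mon_lt_irr rs. Qed.

Lemma mon_lt_asym r s : mon_lt r s -> ~ mon_lt s r.
Proof. by move=> rs /(mon_lt_trans rs); apply: mon_lt_irr. Qed.

Lemma mon_lt_le_trans r s t : mon_lt r s -> mon_le s t -> mon_lt r t.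
Proof. by move=> rs [<-//|]; exact: mon_lt_trans. Qed.

Lemma mon_lt_total r s : r <> s -> mon_lt r s \/ mon_lt s r.
Proof.
move=> rs; have [|b [rsb minb]] := @olt_wf_min _ (fun b => r b <> s b).
  by apply: contra_notP rs => /forallNP rs; apply: funext => b; apply: NNPP.
have eqb c : olt c b -> r c = s c by move=> cb; apply: NNPP => /minb; apply.
case: (ltgtP (r b) (s b)) => // ltb; [left|right]; exists b; split=> // c /eqb //.
Qed.

Lemma mon_lt_add u v u' v' :
  mon_lt u v -> mon_le u' v' -> mon_lt (eadd u u') (eadd v v').
Proof.
move=> [b [ltb eqb]] [<-|[b' [ltb' eqb']]].
  by exists b; split=> [|c cb]; rewrite /eadd /= ?ltrD2r // eqb.
rewrite /eadd; case: (olt_total b b') => [bb'|[e|b'b]]; [|subst b'|].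
- exists b; split; first by rewrite (eqb' _ bb') ltrD2r.
  by move=> c cb; rewrite eqb // eqb' //; exact: olt_trans cb bb'.
- by exists b; split=> [|c cb]; [exact: ltrD | rewrite eqb ?eqb'].
- exists b'; split; first by rewrite (eqb _ b'b) ltrD2l.
  by move=> c cb; rewrite eqb ?eqb' //; exact: olt_trans cb b'b.
Qed.

Lemma eupto_self b : eupto R b b = 1.
Proof. by rewrite /eupto asboolT //; left. Qed.

Lemma eupto_neq0 b c : eupto R b c != 0 -> ole c b.
Proof. by rewrite /eupto; case: (pselect (ole c b)) => [//|/asboolF ->]; rewrite eqxx. Qed.

Lemma eupto_mon_le b b' : ole b b' -> mon_le (eupto R b) (eupto R b').
Proof.
case=> [e|bb']; first by left; rewrite e.
right; exists (osucc b); split.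
  have sb_le_b' : ole (osucc b) b' by case: (osucc_least bb') => [->|]; [left|right].
  have sb_nle_b : ~ ole (osucc b) b.
    case=> [e|]; last exact: olt_asym (osucc_gt b).
    by move: (osucc_gt b); rewrite e; apply: olt_irrefl.
  by rewrite /eupto (asboolF sb_nle_b) (asboolT sb_le_b') ltr01.
move=> c /olt_osucc cb; have cb' : ole c b' by right; apply: ole_olt_trans cb bb'.
by rewrite /eupto (asboolT cb) (asboolT cb').
Qed.

Lemma mon_lt_eupto p b : mon_lt p (eadd p (eupto R b)).
Proof.
exists (ozero O); split=> [|c /not_olt_ozero] //.
rewrite /eadd /eupto asboolT ?ltrDl ?ltr01 //.
by case: (ozero_least b) => [->|]; [left|right].
Qed.

End Monomials.

Section Series.
Variables (R : realType) (O : ordStruct).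
Local Notation expo := (expo R O).
Local Notation series := (series R O).
Local Notation ezero := (@ezero R O).
Local Notation e0 := (eunit R (ozero O)).
Implicit Types (S U V W : series) (p q r s : expo) (a b c : O).

Lemma well_based_sub (A B : set expo) :
  (forall p, A p -> B p) -> well_based B -> well_based A.
Proof. by move=> AB wbB [u [Au uinc]]; apply: wbB; exists u; split=> // n; apply: AB. Qed.

Lemma mon_lt_incr (u : nat -> expo) : (forall n, mon_lt (u n) (u n.+1)) ->
  forall i j, (i < j)%N -> mon_lt (u i) (u j).
Proof.
move=> uinc i; elim=> // j IH; rewrite ltnS leq_eqVlt => /predU1P [->|ij].
  exact: uinc.
exact: mon_lt_trans (IH ij) (uinc j).
Qed.

Lemma well_based_pair (A : set expo) x y :
  (forall p, A p -> p = x \/ p = y) -> well_based A.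
Proof.
move=> Axy [u [Au uinc]].
have u01 := uinc 0%N; have u12 := uinc 1%N; have u02 := mon_lt_incr uinc (isT : (0 < 2)%N).
case: (Axy _ (Au 0%N)) => e0; case: (Axy _ (Au 1%N)) => e1;
  case: (Axy _ (Au 2%N)) => e2; rewrite ?e0 ?e1 ?e2 in u01 u12 u02;
  solve [exact: mon_lt_irr u01 | exact: mon_lt_irr u12 | exact: mon_lt_irr u02].
Qed.

Lemma supp_below_mono a b S : olt a b -> supp_below a S -> supp_below b S.
Proof. by move=> ab Sa p Sp c pc; exact: olt_trans (Sa p Sp c pc) ab. Qed.

Lemma supp_below_at a S p : supp_below a S -> S p != 0 -> p a = 0.
Proof. by move=> Sa Sp; apply/eqP; apply: contraT => /(Sa p Sp) /olt_irrefl. Qed.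

Lemma supp_below_eq0 a S p : supp_below a S -> p a != 0 -> S p = 0.
Proof. by move=> Sa pa; apply/eqP; apply: contraNT pa => /(supp_below_at Sa) ->. Qed.

Lemma inLa_sub a U V : (forall p, U p != 0 -> V p != 0) -> inLa a V -> inLa a U.
Proof.
move=> UV [Va wbV]; split; first by move=> p /UV; apply: Va.
by apply: well_based_sub wbV => p /UV.
Qed.

Lemma mono_neq0 r p : mono r p != 0 -> p = r.
Proof. by rewrite /mono; case: (pselect (p = r)) => [//|/asboolF ->]; rewrite eqxx. Qed.

Lemma mono_self r : mono r r = 1.
Proof. by rewrite /mono asboolT. Qed.

Lemma mono_other r p : p <> r -> mono r p = 0.
Proof. by move=> pr; rewrite /mono asboolF. Qed.

Lemma cst_neq0 (x : R) p : cst x p != 0 -> p = ezero.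
Proof. by rewrite /cst; case: (pselect (p = ezero)) => [//|/asboolF ->]; rewrite eqxx. Qed.

Lemma cst_self (x : R) : cst x ezero = x.
Proof. by rewrite /cst asboolT. Qed.

Lemma cst_other (x : R) p : p <> ezero -> cst x p = 0.
Proof. by move=> p0; rewrite /cst asboolF. Qed.

Lemma inL_cst1 : inL (cst 1 : series).
Proof.
exists (ozero O); split; first by move=> q /cst_neq0 -> b; rewrite /ezero eqxx.
by apply: (well_based_pair (x := ezero) (y := ezero)) => p /cst_neq0 ->; left.
Qed.

Lemma smul_neq0 U V m : smul U V m != 0 ->
  exists p1 p2, eadd p1 p2 = m /\ U p1 != 0 /\ V p2 != 0.
Proof.
move/fsum_neq0 => [[p1 p2]] /=; case: (pselect (eadd p1 p2 = m)) => [e|/asboolF ->].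
  by rewrite asboolT // mulf_eq0 negb_or => /andP [U1 V2]; exists p1, p2.
by rewrite eqxx.
Qed.

Lemma smul_eq_on U V V' m :
  (forall p1 p2, eadd p1 p2 = m -> U p1 != 0 -> V p2 = V' p2) ->
  smul U V m = smul U V' m.
Proof.
move=> VV'; congr fsum; apply: funext => -[p1 p2] /=.
case: (pselect (eadd p1 p2 = m)) => [e|ne]; last by rewrite !asboolF.
rewrite !asboolT //; have [->|U1] := eqVneq (U p1) 0; first by rewrite !mul0r.
by rewrite (VV' p1 p2).
Qed.

Lemma smul_translate U V e m :
  smul U (fun p => V (eadd p e)) m = smul U V (eadd m e).
Proof.
pose shift (i : expo * expo) := (i.1, eadd i.2 e).
pose unshift (i : expo * expo) := (i.1, eadd i.2 (fun b => - e b)).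
have shiftK : cancel shift unshift.
  by move=> [p1 p2]; congr pair; apply: funext => b; rewrite /eadd /= addrK.
have unshiftK : cancel unshift shift.
  by move=> [p1 p2]; congr pair; apply: funext => b; rewrite /eadd /= subrK.
rewrite [RHS](fsum_reindex _ shiftK unshiftK); congr fsum; apply: funext => -[p1 p2] /=.
suff -> : (eadd p1 p2 = m) = (eadd p1 (eadd p2 e) = eadd m e) by [].
apply: propext; split=> [<-|p12m]; apply: funext => b; first by rewrite /eadd addrA.
by move/(congr1 (fun q => q b - e b)): p12m; rewrite /eadd /= addrA !addrK.
Qed.

Lemma smul_supp_below a U V :
  supp_below a U -> supp_below a V -> supp_below a (smul U V).
Proof.
move=> Ua Va m /smul_neq0 [p1 [p2 [<- [U1 V2]]]] c; rewrite /eadd /=.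
have [p1c|p1c] := eqVneq (p1 c) 0; last by move=> _; exact: Ua _ U1 _ p1c.
by rewrite p1c add0r; apply: Va.
Qed.

Lemma eadd0 p : eadd p ezero = p.
Proof. by apply: funext => b; rewrite /eadd /ezero addr0. Qed.

Lemma smul_cst1r U : smul U (cst 1) = U.
Proof.
apply: funext => m; rewrite /smul (@fsum_single _ _ _ (m, ezero)) /=.
  by rewrite eadd0 asboolT // cst_self mulr1.
move=> [p1 p2] /= ne; have [e|p20] := pselect (p2 = ezero).
  by rewrite e eadd0 asboolF // => p1m; apply: ne; rewrite p1m e.
by rewrite cst_other // mulr0; case: ifP.
Qed.

Lemma smul_monor U s m : smul U (mono s) m = U (fun b => m b - s b).
Proof.
rewrite /smul (@fsum_single _ _ _ ((fun b => m b - s b), s)) /=.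
  by rewrite mono_self mulr1 asboolT //; apply: funext => b; rewrite /eadd subrK.
move=> [p1 p2] /= ne; have [e|ps] := pselect (p2 = s); last first.
  by rewrite mono_other // mulr0; case: ifP.
rewrite e asboolF // => p1m; apply: ne; rewrite -p1m e; congr pair.
by apply: funext => b; rewrite /eadd addrK.
Qed.

Lemma smul_mono r s : smul (mono r) (mono s) = mono (eadd r s).
Proof.
apply: funext => m; rewrite smul_monor /mono; congr (if _ then _ else _).
congr asbool; apply: propext; split=> [e|->].
  by apply: funext => b; rewrite /eadd -e subrK.
by apply: funext => b; rewrite /eadd addrK.
Qed.

Lemma spow_mono r k : spow (mono r) k = mono (fun b => k%:R * r b).
Proof.
elim: k => [|k IH].
  have -> : (fun b => 0%:R * r b) = ezero by apply: funext => b; rewrite mul0r.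
  by apply: funext => p; rewrite /spow /= /cst /mono.
rewrite /spow iterS -/(spow _ _) IH smul_mono; congr mono.
by apply: funext => b; rewrite /eadd mulrS mulrDl mul1r.
Qed.

Lemma spow_cst1 k : spow (cst 1) k = cst 1 :> series.
Proof. by elim: k => [//|k IH]; rewrite /spow iterS -/(spow _ _) IH smul_cst1r. Qed.

Lemma spow1 U : spow U 1 = U.
Proof. by rewrite /spow /= smul_cst1r. Qed.

Lemma spow_level_le a U : (forall p, U p != 0 -> p a <= -1) ->
  forall k p, spow U k p != 0 -> p a <= - k%:R.
Proof.
move=> Ua; elim=> [|k IH] p; first by move=> /cst_neq0 ->; rewrite /ezero oppr0.
rewrite /spow iterS -/(spow _ _) => /smul_neq0 [p1 [p2 [<- [/Ua U1 /IH U2]]]].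
by rewrite /eadd mulrS opprD lerD.
Qed.

Lemma eunit_self a : eunit R a a = 1.
Proof. by rewrite /eunit asboolT. Qed.

Lemma eunit_other a b : b <> a -> eunit R a b = 0.
Proof. by move=> ba; rewrite /eunit asboolF. Qed.

Lemma gtR_lead S : gtR S -> exists M, is_lead S M /\ mon_lt ezero M.
Proof.
move=> /(_ (S ezero + 1)) [M [[SM leadM] posM]].
have M0 : M <> ezero.
  by move=> e; move: posM; rewrite e /sadd /sopp cst_self opprD addNKr oppr_gt0 ltr10.
have lt0M : mon_lt ezero M.
  case: (mon_lt_total M0) => // ltM0; move: (leadM _ ltM0) => /eqP.
  by rewrite /sadd /sopp cst_self opprD addNKr oppr_eq0 oner_eq0.
exists M; split=> //; split=> [|n Mn].
  by move: SM; rewrite /sadd /sopp cst_other // oppr0 addr0.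
move: (leadM _ Mn); rewrite /sadd /sopp cst_other ?oppr0 ?addr0 //.
exact: not_eq_sym (mon_lt_neq (mon_lt_trans lt0M Mn)).
Qed.

Lemma lead_le S M q : is_lead S M -> S q != 0 -> mon_le q M.
Proof.
move=> [_ leadM] Sq; have [->|qM] := pselect (q = M); first by left.
by case: (mon_lt_total qM) => [|/leadM]; [right | move/eqP: Sq].
Qed.

Lemma ezero_lt_e0 : mon_lt ezero e0.
Proof. by exists (ozero O); split=> [|c /not_olt_ozero //]; rewrite eunit_self ltr01. Qed.

Lemma gtR_lead_e0 S : S e0 = 1 -> (forall p, mon_lt e0 p -> S p = 0) -> gtR S.
Proof.
move=> S1 S0 x; have e0_neq0 := not_eq_sym (mon_lt_neq ezero_lt_e0).
exists e0; split; [split|].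
- by rewrite /sadd /sopp S1 cst_other ?oppr0 ?addr0 ?oner_eq0.
- move=> n e0n; rewrite /sadd /sopp S0 // cst_other ?oppr0 ?addr0 //.
  exact: not_eq_sym (mon_lt_neq (mon_lt_trans ezero_lt_e0 e0n)).
- by rewrite /sadd /sopp S1 cst_other ?oppr0 ?addr0 ?ltr01.
Qed.

End Series.

Section Derivation.
Variables (R : realType) (O : ordStruct).
Local Notation expo := (expo R O).
Local Notation series := (series R O).
Implicit Types (S : series) (p q : expo) (a b c : O).

Lemma sder_neq0 S p : sder S p != 0 ->
  exists b, S (eadd p (eupto R b)) != 0 /\ p b + 1 != 0.
Proof. by move/fsum_neq0 => [b]; rewrite mulf_eq0 negb_or => /andP [pb Sb]; exists b. Qed.

Lemma supp_below_sder a S : supp_below a S -> supp_below a (sder S).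
Proof.
move=> Sa p /sder_neq0 [b [Sb pb1]] c pc.
have lt_b_a : olt b a by apply: (Sa _ Sb); rewrite /eadd /= eupto_self.
have [pbc|pbc] := eqVneq (eadd p (eupto R b) c) 0; last exact: Sa _ Sb _ pbc.
apply: ole_olt_trans lt_b_a; apply: (eupto_neq0 (R := R)).
by apply: contra pc => /eqP ebc; rewrite -pbc /eadd /= ebc addr0.
Qed.

(* An increasing sequence in the support of S' lifts to one in the support of S
   along a subsequence on which the derivation index is nondecreasing. *)
Lemma well_based_sder S : well_based (supp S) -> well_based (supp (sder S)).
Proof.
move=> wbS [u [Su uinc]].
have /choice [b Sb] : forall n, exists b, S (eadd (u n) (eupto R b)) != 0 /\ u n b + 1 != 0.
  by move=> n; apply: sder_neq0; apply: Su.
have [phi [phi_inc b_mono]] := olt_nondecreasing_subseq b.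
apply: wbS; exists (fun k => eadd (u (phi k)) (eupto R (b (phi k)))); split.
  by move=> k; case: (Sb (phi k)).
move=> k /=; apply: mon_lt_add; first exact: (mon_lt_incr uinc (phi_inc k)).
exact: (eupto_mon_le R (b_mono k)).
Qed.

Lemma inLa_sderN a S k : inLa a S -> inLa a (sderN k S).
Proof.
move=> [Sa wbS]; elim: k => [//|k [IHa IHwb]].
by rewrite /sderN iterS; split; [apply: supp_below_sder | apply: well_based_sder].
Qed.

Lemma sderN_lt S k p : sderN k.+1 S p != 0 -> exists q, S q != 0 /\ mon_lt p q.
Proof.
elim: k p => [|k IH] p /sder_neq0 [b [Sb _]].
  by exists (eadd p (eupto R b)); split=> //; apply: mon_lt_eupto.
have [q [Sq lt_q]] := IH _ Sb.
by exists q; split=> //; exact: mon_lt_trans (mon_lt_eupto p b) lt_q.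
Qed.

End Derivation.

Section Infinitesimals.
Variables (R : realType) (O : ordStruct).
Local Notation expo := (expo R O).
Local Notation series := (series R O).
Local Notation ezero := (@ezero R O).
Local Notation e0 := (eunit R (ozero O)).
Local Notation xL := (@xL R O).
Implicit Types (S : series) (p q : expo) (a b c : O).

Definition eshift a (k : R) p : expo := eadd p (fun b => k * eunit R a b).

Definition eunit_inv a : expo := fun b => - eunit R a b.

Definition ell_inv a : series := mono (eunit_inv a).

Lemma eshift_self a k p : eshift a k p a = p a + k.
Proof. by rewrite /eshift /eadd eunit_self mulr1. Qed.

Lemma eshift_other a k p b : b <> a -> eshift a k p b = p b.
Proof. by move=> ba; rewrite /eshift /eadd eunit_other // mulr0 addr0. Qed.

Lemma eshift0 a p : eshift a 0 p = p.
Proof. by apply: funext => b; rewrite /eshift /eadd mul0r addr0. Qed.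

Lemma eshiftK a k p : eshift a k (eshift a (- k) p) = p.
Proof. by apply: funext => b; rewrite /eshift /eadd mulNr subrK. Qed.

Lemma mon_lt_eshift a k p : 0 < k -> mon_lt p (eshift a k p).
Proof.
move=> k0; exists a; split; first by rewrite eshift_self ltrDl.
by move=> b ba; rewrite eshift_other // => e; rewrite e in ba; exact: olt_irrefl ba.
Qed.

Lemma inL_xL : inL xL.
Proof.
exists (osucc (ozero O)); split.
  move=> q /mono_neq0 -> c; have [-> _|c0] := pselect (c = ozero O); first exact: osucc_gt.
  by rewrite eunit_other ?eqxx.
by apply: (well_based_pair (x := e0) (y := e0)) => p /mono_neq0 ->; left.
Qed.

Lemma gtR_xL : gtR xL.
Proof.
apply: gtR_lead_e0 => [|p e0p]; first exact: mono_self.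
exact/mono_other/not_eq_sym/mon_lt_neq.
Qed.

Lemma inL_ell_inv a : inL (ell_inv a).
Proof.
exists (osucc a); split.
  move=> q /mono_neq0 -> c; have [-> _|ca] := pselect (c = a); first exact: osucc_gt.
  by rewrite /eunit_inv eunit_other ?oppr0 ?eqxx.
by apply: (well_based_pair (x := eunit_inv a) (y := eunit_inv a)) => p /mono_neq0 ->; left.
Qed.

Section FreshOrdinal.
Variable a : O.
Hypothesis a_neq0 : a <> ozero O.

Lemma eunit_inv_lt_e0 : mon_lt (eunit_inv a) e0.
Proof.
exists (ozero O); split=> [|c /not_olt_ozero //].
by rewrite /eunit_inv eunit_self eunit_other ?oppr0 ?ltr01 //; exact: not_eq_sym.
Qed.

Lemma ell_inv_lt_xL : asym_lt (ell_inv a) xL.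
Proof.
exists e0; split=> [|n /mono_neq0 ->]; last exact: eunit_inv_lt_e0.
split=> [|n e0n]; first by rewrite /xL mono_self oner_eq0.
by rewrite /xL mono_other //; exact: not_eq_sym (mon_lt_neq e0n).
Qed.

Lemma inL_xL_add_ell_inv : inL (sadd xL (ell_inv a)).
Proof.
have supp_xe p : sadd xL (ell_inv a) p != 0 -> p = e0 \/ p = eunit_inv a.
  have [->|pe0] := pselect (p = e0); first by left.
  by rewrite /sadd /xL mono_other // add0r => /mono_neq0; right.
exists (osucc a); split; last exact: well_based_pair supp_xe.
move=> q /supp_xe [->|->] c; last first.
  have [-> _|ca] := pselect (c = a); first exact: osucc_gt.
  by rewrite /eunit_inv eunit_other ?oppr0 ?eqxx.
have [-> _|c0] := pselect (c = ozero O); last by rewrite eunit_other ?eqxx.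
by apply: ole_olt_trans (osucc_gt a); case: (ozero_least a) => [->|]; [left|right].
Qed.

Lemma gtR_xL_add_ell_inv : gtR (sadd xL (ell_inv a)).
Proof.
have e0_neq_inv := not_eq_sym (mon_lt_neq eunit_inv_lt_e0).
apply: gtR_lead_e0 => [|p e0p].
  by rewrite /sadd /xL mono_self /ell_inv mono_other // addr0.
rewrite /sadd /xL /ell_inv !mono_other ?addr0 //; apply/not_eq_sym/mon_lt_neq => //.
exact: mon_lt_trans eunit_inv_lt_e0 e0p.
Qed.

End FreshOrdinal.
End Infinitesimals.

Section Composition.
Variables (R : realType) (O : ordStruct) (comp : series R O -> series R O -> series R O).
Hypothesis comp_law : is_composition comp.
Hypothesis comp_taylor : admits_taylor comp.
Local Notation expo := (expo R O).
Local Notation series := (series R O).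
Local Notation xL := (@xL R O).
Implicit Types (f g h S : series) (p q m n : expo).

Definition taylor_term f g h (k : nat) : series :=
  sscale (k`!%:R)^-1 (smul (comp (sderN k f) g) (spow h k)).

Lemma inL_comp f g : inL f -> gtR g -> inL (comp f g).
Proof. by case: comp_law => + _; apply. Qed.

Lemma comp_xL f : inL f -> comp f xL = f.
Proof. by case: comp_law => _ [_ [_ [_ [_ [+ _]]]]]; apply. Qed.

Lemma compA f g h : inL f -> inL g -> inL h -> gtR g -> gtR h ->
  comp (comp f g) h = comp f (comp g h).
Proof. by case: comp_law => _ [_ [_ [_ [_ [_ [_ [_ [_ +]]]]]]]]; apply. Qed.

Lemma taylor_summable f g h : inL f -> inL g -> inL h -> gtR g -> asym_lt h g ->
  summable (taylor_term f g h).
Proof. by move=> Lf Lg Lh Gg hg; case: (comp_taylor Lf Lg Lh Gg hg). Qed.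

Lemma comp_taylor_sum f g h : inL f -> inL g -> inL h -> gtR g -> asym_lt h g ->
  comp f (sadd g h) = ssum (taylor_term f g h).
Proof. by move=> Lf Lg Lh Gg hg; case: (comp_taylor Lf Lg Lh Gg hg). Qed.

Lemma invr_fact_neq0 k : ((k`!)%:R : R)^-1 != 0.
Proof. by rewrite invr_neq0 // pnatr_eq0 -lt0n fact_gt0. Qed.

(* The Taylor family of f at g with increment 1 is summable, so all the
   f^(k) o g live in a common L_{<a}. *)
Lemma comp_derivs_below f g : inL f -> inL g -> gtR g ->
  exists a, forall k, supp_below a (comp (sderN k f) g).
Proof.
move=> Lf Lg Gg; have [M [leadM lt0M]] := gtR_lead Gg.
have one_lt_g : asym_lt (cst 1) g by exists M; split=> // n /cst_neq0 ->.
have [[a Ta] _] := taylor_summable Lf Lg (inL_cst1 R O) Gg one_lt_g.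
exists a => k q fq; apply: (Ta k).1.
by rewrite /taylor_term spow_cst1 smul_cst1r /sscale mulf_neq0 ?invr_fact_neq0.
Qed.

Section FreshOrdinal.
Variable a : O.
Hypothesis a_neq0 : a <> ozero O.
Local Notation xe := (sadd xL (ell_inv a)).

Lemma taylor_term_xL S k p : inL (sderN k S) ->
  taylor_term S xL (ell_inv a) k p = (k`!%:R)^-1 * sderN k S (eshift a k%:R p).
Proof.
move=> LS; rewrite /taylor_term /sscale comp_xL // /ell_inv spow_mono smul_monor.
by congr (_ * sderN _ _ _); apply: funext => b; rewrite /eshift /eadd mulrN opprK.
Qed.

Lemma taylor_term_xL_level S k p : inLa a S ->
  taylor_term S xL (ell_inv a) k p != 0 -> p a = - k%:R.
Proof.
move=> LS; rewrite taylor_term_xL; last by exists a; apply: inLa_sderN.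
rewrite mulf_eq0 negb_or => /andP [_ /(supp_below_at (inLa_sderN k LS).1)].
by rewrite eshift_self => /eqP; rewrite addr_eq0 => /eqP.
Qed.

Lemma comp_xe_taylor S : inLa a S -> comp S xe = ssum (taylor_term S xL (ell_inv a)).
Proof.
move=> LS; apply: comp_taylor_sum; first by exists a.
- exact: inL_xL.
- exact: inL_ell_inv.
- exact: gtR_xL.
- exact: ell_inv_lt_xL.
Qed.

Lemma comp_xe_coef S k p : inLa a S -> p a = - k%:R ->
  comp S xe p = (k`!%:R)^-1 * sderN k S (eshift a k%:R p).
Proof.
move=> LS pa; rewrite comp_xe_taylor // /ssum (@fsum_single _ _ _ k) => [|j jk].
  by rewrite taylor_term_xL //; exists a; apply: inLa_sderN.
apply/eqP; apply: contraT => /(taylor_term_xL_level LS); rewrite pa => /oppr_inj /eqP.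
by rewrite eqr_nat => /eqP kj; case: jk.
Qed.

Lemma comp_xe_neq0 S p : inLa a S -> comp S xe p != 0 ->
  exists k, p a = - k%:R /\ sderN k S (eshift a k%:R p) != 0.
Proof.
move=> LS; rewrite comp_xe_taylor // => /fsum_neq0 [k Tk].
exists k; split; first exact: taylor_term_xL_level Tk.
move: Tk; rewrite taylor_term_xL; last by exists a; apply: inLa_sderN.
by rewrite mulf_eq0 negb_or => /andP [].
Qed.

Lemma comp_xe_level0 S p : inLa a S -> p a = 0 -> comp S xe p = S p.
Proof.
by move=> LS pa; rewrite (@comp_xe_coef _ 0) ?pa ?mulr0n ?oppr0 // fact0 invr1 mul1r eshift0.
Qed.

Lemma comp_xe_level1 S p : inLa a S -> p a = -1 -> comp S xe p = sder S (eshift a 1 p).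
Proof.
by move=> LS pa; rewrite (@comp_xe_coef _ 1) ?pa // factS fact0 muln1 mulr1n invr1 mul1r.
Qed.

Section Increment.
Variables f g : series.
Hypotheses (Lf : inL f) (Lga : inLa a g) (Gg : gtR g).
Hypothesis f_derivs_below : forall k, supp_below a (comp (sderN k f) g).

Let Lg : inL g := ex_intro _ a Lga.

Local Notation h := (sadd (comp g xe) (sopp g)).

Lemma increment_level0 p : p a = 0 -> h p = 0.
Proof. by move=> pa; rewrite /sadd /sopp comp_xe_level0 // subrr. Qed.

Lemma increment_off_level0 p : p a != 0 -> h p = comp g xe p.
Proof. by move=> pa; rewrite /sadd /sopp (supp_below_eq0 Lga.1 pa) oppr0 addr0. Qed.

Lemma increment_neq0 p : h p != 0 ->
  exists k, (0 < k)%N /\ p a = - k%:R /\ sderN k g (eshift a k%:R p) != 0.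
Proof.
move=> hp; have pa : p a != 0 by apply: contra hp => /eqP /increment_level0 ->.
move: hp; rewrite increment_off_level0 // => /(comp_xe_neq0 Lga) [k [pak gk]].
by exists k; split=> //; rewrite lt0n; apply: contra pa => /eqP k0; rewrite pak k0 oppr0.
Qed.

Lemma increment_level_le p : h p != 0 -> p a <= -1.
Proof. by move=> /increment_neq0 [k [k0 [-> _]]]; rewrite lerN2 ler1n. Qed.

Lemma increment_level1 p : p a = -1 -> h p = sder g (eshift a 1 p).
Proof.
move=> pa; rewrite increment_off_level0 ?comp_xe_level1 //.
by rewrite pa oppr_eq0 oner_eq0.
Qed.

Lemma inL_increment : inL h.
Proof.
have [b Lb] := inL_comp Lg (gtR_xL_add_ell_inv a_neq0).
exists b; apply: inLa_sub Lb => p hp.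
have pa : p a != 0 by apply: contra hp => /eqP /increment_level0 ->.
by rewrite -increment_off_level0.
Qed.

Lemma increment_lt : asym_lt h g.
Proof.
have [M [leadM _]] := gtR_lead Gg.
exists M; split=> // p /increment_neq0 [k [k0 [_ gk]]]; case: k k0 gk => // k _ gk.
have [q [gq lt_q]] := sderN_lt gk.
apply: mon_lt_trans (mon_lt_eshift a p (ltr0Sn _ k)) _.
exact: mon_lt_le_trans lt_q (lead_le leadM gq).
Qed.

Lemma comp_add_increment_level1 m : m a = -1 ->
  comp f (sadd g h) m = smul (comp (sder f) g) h m.
Proof.
move=> ma; rewrite (comp_taylor_sum Lf Lg inL_increment Gg increment_lt).
rewrite /ssum (@fsum_single _ _ _ 1%N) => [|k k1].
  by rewrite /taylor_term /sscale factS fact0 muln1 mulr1n invr1 mul1r spow1.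
apply/eqP; apply: contraT; rewrite /taylor_term /sscale mulf_eq0 negb_or => /andP [_].
case: k k1 => [_|k k1].
  rewrite /spow /= smul_cst1r => /(supp_below_at (@f_derivs_below 0%N)).
  by rewrite ma => /eqP; rewrite oppr_eq0 oner_eq0.
move=> /smul_neq0 [p1 [p2 [p12 [/(supp_below_at (@f_derivs_below _)) p1a]]]].
move=> /(spow_level_le increment_level_le) p2a.
have : m a <= - k.+1%:R by rewrite -p12 /eadd /= p1a add0r.
by rewrite ma lerN2 lern1 ltnS leqn0 => /eqP k0; case: k1; rewrite k0.
Qed.

Lemma chain_rule_fresh : sder (comp f g) = smul (comp (sder f) g) (sder g).
Proof.
have LFa : inLa a (comp f g).
  by split; [exact: (@f_derivs_below 0%N) | have [b [_ ]] := inL_comp Lf Gg].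
apply: funext => n; have [na|na] := eqVneq (n a) 0; last first.
  have below_rhs := smul_supp_below (@f_derivs_below 1%N) (supp_below_sder Lga.1).
  by rewrite (supp_below_eq0 (supp_below_sder LFa.1) na) (supp_below_eq0 below_rhs na).
pose m := eshift a (-1) n.
have ma : m a = -1 by rewrite /m eshift_self na add0r.
have -> : n = eshift a 1 m by rewrite eshiftK.
have Gxe := gtR_xL_add_ell_inv (R := R) a_neq0.
rewrite -comp_xe_level1 // (compA Lf Lg (inL_xL_add_ell_inv R a) Gg Gxe).
have -> : comp g xe = sadd g h by apply: funext => p; rewrite /sadd /sopp addrC subrK.
rewrite comp_add_increment_level1 // /eshift -smul_translate.
apply: smul_eq_on => p1 p2 p12 fp1; apply: increment_level1.
move/(congr1 (fun q => q a)): p12; rewrite /eadd /= (supp_below_at (@f_derivs_below 1%N) fp1).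
by rewrite add0r ma.
Qed.

End Increment.
End FreshOrdinal.
End Composition.

Theorem lemma9p2 (R : realType) (O : ordStruct)
    (comp : series R O -> series R O -> series R O) :
  is_composition comp -> admits_taylor comp ->
  forall f g : series R O, inL f -> inL g -> gtR g ->
    sder (comp f g) = smul (comp (sder f) g) (sder g).
Proof.
move=> comp_law comp_taylor f g Lf Lg Gg.
have [a1 f_derivs_below] := comp_derivs_below comp_taylor Lf Lg Gg.
have [ag [g_below wb_g]] := Lg.
have [a [a1a aga]] := olt_ub2 a1 ag.
apply: (chain_rule_fresh comp_law comp_taylor (olt_neq_ozero a1a) Lf _ Gg).
- by split=> //; apply: supp_below_mono g_below.
- by move=> k; apply: supp_below_mono (f_derivs_below k).
Qed.
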